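(* Let $\alpha\in(0,\pi/2)$ and define $$\beta_0(\alpha)=\begin{cases}\alpha & \text{if } \alpha\in(0,\pi/6],\\ \tfrac12\arccos\!\left(\dfrac{-2\cos(4\alpha)+\cos(6\alpha)+2}{3-2\cos(4\alpha)}\right) & \text{if } \alpha\in(\pi/6,\pi/3),\\ 0 & \text{if } \alpha\in[\pi/3,\pi/2).\end{cases}$$ Then $\beta=\beta_0(\alpha)$ minimizes, over $\beta\in[0,\alpha]$, the competitive ratio of the $\beta$-Hedge algorithm with parameter $\beta$, and with this choice the competitive ratio equals $$\rho(\beta\text{-Hedge};\alpha)=\begin{cases}1/\cos\alpha & \text{if } \alpha\in(0,\pi/6),\\ f_1(\alpha,\beta_0,r_0(\alpha,\beta_0)) & \text{if } \alpha\in[\pi/6,\pi/3],\\ 1/\sin\alpha & \text{if } \alpha\in[\pi/3,\pi/2).\end{cases}$$ This bound is tight: it is attained by the adversarial choice $r=r_0(\alpha,\beta_0)$ of the right extent of the good input, where in particular $r_0=1$ if $\alpha\le\pi/6$ and $r_0=-\cos(2\alpha)$ if $\alpha\ge\pi/3$.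
   Context: Online drone coverage on a line. A drone has a fixed half angle-of-view $\alpha\in(0,\pi/2)$. A drone at a point $T=(t_x,t_y)$ with $t_y\ge 0$ covers the segment $[t_x-t_y\tan\alpha,\ t_x+t_y\tan\alpha]$ of the $x$-axis. For a point $X=(x,0)$ its feasibility cone is $\mathrm{FC}(X)=\{(u,v): v\ge 0,\ |u-x|\le v\tan\alpha\}$, and the feasibility cone of a finite set of points on the $x$-axis is the intersection of their cones. An input is a sequence of points $X_0=(0,0),X_1,\dots,X_n$ ($n\ge1$) on the $x$-axis, $X_i=(x_i,0)$, revealed one at a time. A solution is a sequence of drone positions $P_0=(0,0),P_1,\dots,P_n$ with $P_i\in \mathrm{FC}(X_0,\dots,X_i)$; its cost is $\sum_{i=0}^{n-1}|P_iP_{i+1}|$ (Euclidean). An online algorithm chooses $P_i$ knowing only $X_0,\dots,X_i$. $\mathrm{OPT}(\mathbf X;\alpha)$ is the minimum cost of a solution when the whole input is known in advance. A request $X_{i+1}$ is redundant if $x_{i+1}\in[\min_{j\le i}x_j,\max_{j\le i}x_j]$. An input is good if it has no redundant requests and is scaled (and possibly reflected) so that $\min_j x_j=-1$ and $r:=\max_j x_j\in[0,1]$. The competitive ratio is the supremum over good inputs of $\mathrm{ALG}(\mathbf X;\alpha)/\mathrm{OPT}(\mathbf X;\alpha)$. The $\beta$-Hedge algorithm with parameter $\beta\in[0,\alpha]$: if $P_{i-1}\in\mathrm{FC}(X_0,\dots,X_i)$ then $P_i=P_{i-1}$; otherwise the drone moves from $P_{i-1}$ along the ray making angle $\beta$ with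 the upward vertical and tilted toward the side of the new request (direction $(\operatorname{sgn}(x_i)\sin\beta,\cos\beta)$), and $P_i$ is the first point of this ray lying in $\mathrm{FC}(X_0,\dots,X_i)$. Define, for $\beta\in[0,\alpha]$ and $r\in[0,1]$, $$f_1(\alpha,\beta,r)=\frac{2\sin\alpha}{\cos\beta(\tan\alpha+\tan\beta)}\cdot\frac{1+\frac{2\tan\beta}{\tan\alpha+\tan\beta}\,r}{\sqrt{1+r^2+2\cos(2\alpha)\,r}},$$ and with $A=\frac{2\tan\beta}{\tan\alpha+\tan\beta}$, $B=2\cos(2\alpha)$, let $r_0(\alpha,\beta)=\frac{2A-B}{2-AB}$. *)

From Stdlib Require Import Reals Lra ClassicalEpsilon.
From Coquelicot Require Import Coquelicot.
Open Scope R_scope.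

(* An input X_0,...,X_n is given by n and x : nat -> R (only x 0..x n matter);
   X_i = (x i, 0). Drone positions are pairs (u,v) : R*R. *)

Definition in_FC (alpha : R) (x : nat -> R) (i : nat) (P : R * R) : Prop :=
  0 <= snd P /\ forall j, (j <= i)%nat -> Rabs (fst P - x j) <= snd P * tan alpha.

Definition dist2 (P Q : R * R) : R :=
  sqrt ((fst P - fst Q) ^ 2 + (snd P - snd Q) ^ 2).

Fixpoint path_cost (P : nat -> R * R) (n : nat) : R :=
  match n with
  | O => 0
  | S k => path_cost P k + dist2 (P k) (P (S k))
  end.

Definition feasible (alpha : R) (n : nat) (x : nat -> R) (P : nat -> R * R) : Prop :=
  P O = (0, 0) /\ forall i, (i <= n)%nat -> in_FC alpha x i (P i).

Definition OPT (alpha : R) (n : nat) (x : nat -> R) : R :=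
  real (Glb_Rbar (fun c => exists P, feasible alpha n x P /\ c = path_cost P n)).

Definition sgnR (y : R) : R :=
  if Rlt_dec 0 y then 1 else if Rlt_dec y 0 then -1 else 0.

Fixpoint hedge (alpha beta : R) (x : nat -> R) (i : nat) : R * R :=
  match i with
  | O => (0, 0)
  | S k =>
      let P := hedge alpha beta x k in
      if excluded_middle_informative (in_FC alpha x (S k) P) then P
      else
        let d := (sgnR (x (S k)) * sin beta, cos beta) in
        let t := real (Glb_Rbar (fun t => 0 <= t /\
                   in_FC alpha x (S k) (fst P + t * fst d, snd P + t * snd d))) in
        (fst P + t * fst d, snd P + t * snd d)
  end.

Definition ALG_hedge (alpha beta : R) (n : nat) (x : nat -> R) : R :=
  path_cost (hedge alpha beta x) n.

(* good input with right extent r = max_j x_j: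
   n >= 1, x_0 = 0, no redundant request, min_j x_j = -1, max_j x_j = r ∈ [0,1]. *)
Definition good_input_r (n : nat) (x : nat -> R) (r : R) : Prop :=
  (1 <= n)%nat /\ x O = 0 /\
  (forall i, (i < n)%nat ->
     (forall j, (j <= i)%nat -> x j < x (S i)) \/
     (forall j, (j <= i)%nat -> x (S i) < x j)) /\
  (exists j, (j <= n)%nat /\ x j = -1) /\ (forall j, (j <= n)%nat -> -1 <= x j) /\
  (exists j, (j <= n)%nat /\ x j = r) /\ (forall j, (j <= n)%nat -> x j <= r) /\
  0 <= r <= 1.

Definition good_input (n : nat) (x : nat -> R) : Prop :=
  exists r, good_input_r n x r.

Definition comp_ratio (alpha beta : R) : Rbar :=
  Lub_Rbar (fun q => exists n x, good_input n x /\
                       q = ALG_hedge alpha beta n x / OPT alpha n x).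

Definition comp_ratio_r (alpha beta r : R) : Rbar :=
  Lub_Rbar (fun q => exists n x, good_input_r n x r /\
                       q = ALG_hedge alpha beta n x / OPT alpha n x).

Definition f1 (alpha beta r : R) : R :=
  2 * sin alpha / (cos beta * (tan alpha + tan beta)) *
  ((1 + 2 * tan beta / (tan alpha + tan beta) * r) /
   sqrt (1 + r ^ 2 + 2 * cos (2 * alpha) * r)).

Definition r0 (alpha beta : R) : R :=
  let A := 2 * tan beta / (tan alpha + tan beta) in
  let B := 2 * cos (2 * alpha) in
  (2 * A - B) / (2 - A * B).

Definition beta0 (alpha : R) : R :=
  if Rle_dec alpha (PI / 6) then alpha
  else if Rlt_dec alpha (PI / 3) then
    / 2 * acos ((- 2 * cos (4 * alpha) + cos (6 * alpha) + 2) / (3 - 2 * cos (4 * alpha)))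
  else 0.

Definition rho_hedge (alpha : R) : R :=
  if Rlt_dec alpha (PI / 6) then / cos alpha
  else if Rle_dec alpha (PI / 3) then f1 alpha (beta0 alpha) (r0 alpha (beta0 alpha))
  else / sin alpha.

(* Write [u] and [w] for the distances from the origin to the two ends of the segment covered by
   the drone, and [A = 2 tan beta / (tan alpha + tan beta)].  When beta-Hedge serves a request
   beyond one end, that end moves onto the request, the other end advances [1 - A] times as far,
   and the drone travels [1 / (sin beta + tan alpha cos beta)] per unit of advance of the leading
   end.  An invariant relating [u], [w] and the extreme requests bounds the cost on a good input
   of right extent [r] by [(1 + A r) / (sin beta + tan alpha cos beta)], with equality on the
   input [0, r, -1].  OPT is the distance from the origin to the cone FC(-1, r): its apex when
   [r >= - cos (2 alpha)], otherwise at least the distance to FC(-1).  Hence the competitive ratio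
   is [sqrt ((1 - A)^2 + tan^2 alpha (1 + A)^2) / (sin beta + tan alpha cos beta)], attained at
   [r = r0], whenever [A > cos (2 alpha)]; for smaller [A] the single request [-1] gives a lower
   bound.  The square of that ratio is, up to a constant, a quartic in [A] whose minimum
   over [0, 1] is at [A = min 1 (max 0 (1/2 + cos (2 alpha)))], the value of [A] at
   [beta0 alpha]. *)

From Stdlib Require Import Reals Lra Psatz ClassicalEpsilon.
From Coquelicot Require Import Coquelicot.
Open Scope R_scope.

Lemma real_Glb_Rbar_ge (E : R -> Prop) (m e0 : R) :
  E e0 -> (forall e, E e -> m <= e) -> m <= real (Glb_Rbar E).
Proof.
  intros He0 Hm. destruct (Glb_Rbar_correct E) as [Hlb Hglb].
  assert (Hle : Rbar_le m (Glb_Rbar E)) by (apply Hglb; intros e He; apply Hm, He).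
  specialize (Hlb e0 He0).
  destruct (Glb_Rbar E); simpl in *; [exact Hle | contradiction | contradiction].
Qed.

Lemma real_Glb_Rbar_min (E : R -> Prop) (m : R) :
  E m -> (forall e, E e -> m <= e) -> real (Glb_Rbar E) = m.
Proof.
  intros Hm Hlb. destruct (Glb_Rbar_correct E) as [Hlb' Hglb].
  replace (Glb_Rbar E) with (Finite m); [reflexivity|].
  apply Rbar_le_antisym; [apply Hglb; intros e He; apply Hlb, He | apply Hlb', Hm].
Qed.

Lemma Lub_Rbar_ge (E : R -> Prop) (q m : R) : E q -> m <= q -> Rbar_le m (Lub_Rbar E).
Proof.
  intros Hq Hm. destruct (Lub_Rbar_correct E) as [Hub _].
  apply Rbar_le_trans with q; [exact Hm | exact (Hub q Hq)].
Qed.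

Lemma Lub_Rbar_max (E : R -> Prop) (m : R) :
  E m -> (forall e, E e -> e <= m) -> Lub_Rbar E = m.
Proof.
  intros Hm Hub. apply is_lub_Rbar_unique. split.
  - intros e He. exact (Hub e He).
  - intros b Hb. exact (Hb m Hm).
Qed.

Lemma dist2_triangle P Q S : dist2 P S <= dist2 P Q + dist2 Q S.
Proof.
  assert (E : forall A B, dist2 A B = dist_euc (fst A) (snd A) (fst B) (snd B))
    by (intros; unfold dist2, dist_euc, Rsqr; f_equal; ring).
  rewrite !E. apply triangle.
Qed.

Lemma dist2_self P : dist2 P P = 0.
Proof. unfold dist2. rewrite <- sqrt_0. f_equal. ring. Qed.

Lemma dist2_unit_step P s a b : 0 <= s -> a ^ 2 + b ^ 2 = 1 ->
  dist2 P (fst P + s * a, snd P + s * b) = s.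
Proof.
  intros Hs Hab. unfold dist2; cbn [fst snd].
  transitivity (sqrt (s ^ 2)); [f_equal | exact (sqrt_pow2 s Hs)].
  rewrite <- (Rmult_1_r (s ^ 2)), <- Hab. ring.
Qed.

Lemma path_cost_ge_dist2 P n : dist2 (P O) (P n) <= path_cost P n.
Proof.
  induction n as [|n IH]; simpl path_cost.
  - rewrite dist2_self. lra.
  - pose proof (dist2_triangle (P O) (P n) (P (S n))). lra.
Qed.

(* squared distance from the origin to ((r - 1) / 2, (1 + r) / (2 T)), the apex of FC(-1, r) *)
Definition apex_sq_dist (T r : R) : R :=
  ((r - 1) ^ 2 * T ^ 2 + (1 + r) ^ 2) / (4 * T ^ 2).

Lemma apex_sq_dist_pos T r : 0 < T -> 0 < apex_sq_dist T r.
Proof.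
  intros HT. unfold apex_sq_dist. apply Rdiv_lt_0_compat; [|nra].
  assert (0 <= (r - 1) ^ 2 * T ^ 2) by (apply Rmult_le_pos; apply pow2_ge_0).
  destruct (Req_dec r (-1)) as [->|Hr]; [nra|].
  assert (0 < (1 + r) ^ 2) by (apply pow2_gt_0; lra). lra.
Qed.

Lemma sq_dist_halfplane_ge T p v : 0 < T -> 1 <= v * T - p -> / (1 + T ^ 2) <= p ^ 2 + v ^ 2.
Proof.
  intros HT H.
  assert (Hcs : (1 + T ^ 2) * (p ^ 2 + v ^ 2) = (v * T - p) ^ 2 + (v + p * T) ^ 2) by ring.
  pose proof (pow2_ge_0 (v + p * T)).
  apply (Rmult_le_reg_l (1 + T ^ 2)); [nra|].
  rewrite Rinv_r by nra. nra.
Qed.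

Lemma sq_dist_wedge_ge T p v r : 0 < T -> r <= 1 -> T ^ 2 - 1 <= r * (1 + T ^ 2) ->
  1 <= v * T - p -> r <= v * T + p -> apex_sq_dist T r <= p ^ 2 + v ^ 2.
Proof.
  intros HT Hr Hc Ha Hb.
  set (a := v * T - p - 1). set (b := v * T + p - r).
  assert (Ha0 : 0 <= a) by (unfold a; lra).
  assert (Hb0 : 0 <= b) by (unfold b; lra).
  assert (T2 : 0 < T ^ 2) by nra.
  assert (E : 4 * T ^ 2 * (p ^ 2 + v ^ 2) - ((r - 1) ^ 2 * T ^ 2 + (1 + r) ^ 2) =
     T ^ 2 * (b - a) ^ 2 + (a + b) ^ 2 + 2 * a * ((1 + r) - T ^ 2 * (r - 1))
     + 2 * b * (T ^ 2 * (r - 1) + (1 + r))) by (unfold a, b; field; lra).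
  assert (P1 : 0 <= T ^ 2 * (b - a) ^ 2) by (apply Rmult_le_pos; [lra | apply pow2_ge_0]).
  pose proof (pow2_ge_0 (a + b)).
  assert (P3 : 0 <= 2 * a * ((1 + r) - T ^ 2 * (r - 1))) by (apply Rmult_le_pos; nra).
  assert (P4 : 0 <= 2 * b * (T ^ 2 * (r - 1) + (1 + r))) by (apply Rmult_le_pos; nra).
  unfold apex_sq_dist. apply (Rmult_le_reg_l (4 * T ^ 2)); [lra|].
  field_simplify; lra.
Qed.

Definition apex_solution (T r : R) : nat -> R * R :=
  fun i => match i with O => (0, 0) | S _ => ((r - 1) / 2, (1 + r) / (2 * T)) end.

Lemma path_cost_apex_solution T r n : 0 < T -> (1 <= n)%nat ->
  path_cost (apex_solution T r) n = sqrt (apex_sq_dist T r).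
Proof.
  intros HT Hn. induction n as [|[|n] IH]; [lia| |].
  - simpl. rewrite Rplus_0_l. unfold dist2, apex_sq_dist; simpl. f_equal. field. lra.
  - change (path_cost (apex_solution T r) (S (S n))) with
      (path_cost (apex_solution T r) (S n) +
       dist2 (apex_solution T r (S n)) (apex_solution T r (S n))).
    rewrite IH, dist2_self by lia. ring.
Qed.

Lemma apex_solution_feasible alpha n x r : 0 < tan alpha -> good_input_r n x r ->
  feasible alpha n x (apex_solution (tan alpha) r).
Proof.
  intros HT (_ & Hx0 & _ & _ & Hlo & _ & Hhi & Hr).
  split; [reflexivity|]. intros [|i] Hi.
  - split; simpl; [lra|]. intros j Hj. replace j with O by lia.
    rewrite Hx0, Rminus_0_r, Rabs_R0. lra.
  - split; simpl.
    + apply Rle_mult_inv_pos; lra.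
    + intros j Hj. apply Rabs_le_between'.
      specialize (Hlo j ltac:(lia)). specialize (Hhi j ltac:(lia)).
      replace ((1 + r) / (2 * tan alpha) * tan alpha) with ((1 + r) / 2) by (field; lra).
      lra.
Qed.

Lemma feasible_cost_ge alpha n x r P : 0 < tan alpha -> good_input_r n x r ->
  feasible alpha n x P ->
  sqrt (/ (1 + tan alpha ^ 2)) <= path_cost P n /\
  (tan alpha ^ 2 - 1 <= r * (1 + tan alpha ^ 2) ->
   sqrt (apex_sq_dist (tan alpha) r) <= path_cost P n).
Proof.
  intros HT (_ & _ & _ & (j1 & Hj1 & Hxj1) & _ & (j2 & Hj2 & Hxj2) & _ & Hr) [HP0 HPf].
  pose proof (path_cost_ge_dist2 P n) as Hcost. rewrite HP0 in Hcost.
  destruct (HPf n (le_n n)) as [_ Hfc]. destruct (P n) as [p v]. simpl in Hfc.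
  pose proof (proj1 (Rabs_le_between' _ _ _) (Hfc j1 Hj1)) as F1.
  pose proof (proj1 (Rabs_le_between' _ _ _) (Hfc j2 Hj2)) as F2.
  rewrite Hxj1 in F1. rewrite Hxj2 in F2.
  assert (Hd : dist2 (0, 0) (p, v) = sqrt (p ^ 2 + v ^ 2)) by (unfold dist2; simpl; f_equal; ring).
  rewrite Hd in Hcost.
  split; [|intros Hc]; (eapply Rle_trans; [apply sqrt_le_1_alt | exact Hcost]).
  - apply sq_dist_halfplane_ge; lra.
  - apply sq_dist_wedge_ge; lra.
Qed.

Lemma apex_solution_cost alpha n x r : 0 < tan alpha -> good_input_r n x r ->
  exists P, feasible alpha n x P /\ sqrt (apex_sq_dist (tan alpha) r) = path_cost P n.
Proof.
  intros HT G. exists (apex_solution (tan alpha) r). split.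
  - apply apex_solution_feasible; assumption.
  - symmetry. apply path_cost_apex_solution; [assumption | apply G].
Qed.

Lemma OPT_ge_halfplane alpha n x r : 0 < tan alpha -> good_input_r n x r ->
  sqrt (/ (1 + tan alpha ^ 2)) <= OPT alpha n x.
Proof.
  intros HT G. unfold OPT.
  apply real_Glb_Rbar_ge with (sqrt (apex_sq_dist (tan alpha) r)).
  - apply apex_solution_cost; assumption.
  - intros e (P & HP & ->). apply (feasible_cost_ge alpha n x r); assumption.
Qed.

Lemma OPT_apex alpha n x r : 0 < tan alpha -> good_input_r n x r ->
  tan alpha ^ 2 - 1 <= r * (1 + tan alpha ^ 2) ->
  OPT alpha n x = sqrt (apex_sq_dist (tan alpha) r).
Proof.
  intros HT G Hc. apply real_Glb_Rbar_min.
  - apply apex_solution_cost; assumption.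
  - intros e (P & HP & ->). apply (feasible_cost_ge alpha n x r); assumption.
Qed.

Definition admissible (alpha beta : R) : Prop :=
  0 < tan alpha /\ 0 <= sin beta /\ 0 < cos beta /\ sin beta <= tan alpha * cos beta.

(* The segment covered from [P] is [[- edge alpha (-1) P, edge alpha 1 P]]. *)
Definition edge (alpha sigma : R) (P : R * R) : R := sigma * fst P + snd P * tan alpha.

Definition edge_speed (alpha beta : R) : R := sin beta + tan alpha * cos beta.

(* The paper's [A]: a unit move of beta-Hedge advances the leading edge by [edge_speed]
   and the trailing edge by [(1 - tilt) * edge_speed]. *)
Definition tilt (alpha beta : R) : R := 2 * sin beta / edge_speed alpha beta.

Lemma edge_speed_pos alpha beta : admissible alpha beta -> 0 < edge_speed alpha beta.
Proof. intros (HT & Hsb & Hcb & Hba). unfold edge_speed. nra. Qed.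

Lemma tilt_mul_edge_speed alpha beta : admissible alpha beta ->
  tilt alpha beta * edge_speed alpha beta = 2 * sin beta.
Proof. intros Hadm. pose proof (edge_speed_pos _ _ Hadm). unfold tilt. field. lra. Qed.

Lemma tilt_bounds alpha beta : admissible alpha beta -> 0 <= tilt alpha beta <= 1.
Proof.
  intros Hadm. pose proof (edge_speed_pos _ _ Hadm) as Hk.
  pose proof (tilt_mul_edge_speed _ _ Hadm) as E. destruct Hadm as (HT & Hsb & Hcb & Hba).
  unfold edge_speed in *. split; nra.
Qed.

Lemma snd_edges alpha P : 0 < tan alpha ->
  snd P = (edge alpha 1 P + edge alpha (-1) P) / (2 * tan alpha).
Proof. intros HT. unfold edge. field. lra. Qed.

Lemma in_FC_edges alpha x i P : in_FC alpha x i P <->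
  0 <= snd P /\ forall j, (j <= i)%nat -> - edge alpha (-1) P <= x j <= edge alpha 1 P.
Proof.
  unfold in_FC, edge. split; intros [Hv H]; split; auto; intros j Hj; specialize (H j Hj).
  - apply Rabs_le_between' in H. lra.
  - apply Rabs_le_between'. lra.
Qed.

Lemma sgnR_cases y : y <> 0 -> sgnR y = 1 /\ 0 < y \/ sgnR y = -1 /\ y < 0.
Proof.
  intros Hy. unfold sgnR.
  destruct (Rlt_dec 0 y); [left; lra|]. destruct (Rlt_dec y 0); [right; lra | lra].
Qed.

Lemma edge_along_ray alpha beta sigma P s : admissible alpha beta -> sigma * sigma = 1 ->
  let Q := (fst P + s * (sigma * sin beta), snd P + s * cos beta) in
  edge alpha sigma Q = edge alpha sigma P + s * edge_speed alpha beta /\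
  edge alpha (- sigma) Q =
    edge alpha (- sigma) P + s * ((1 - tilt alpha beta) * edge_speed alpha beta).
Proof.
  intros Hadm Hsg Q. rewrite Rmult_minus_distr_r, Rmult_1_l, tilt_mul_edge_speed by exact Hadm.
  unfold Q, edge, edge_speed; cbn [fst snd]. split.
  - replace (sigma * (fst P + s * (sigma * sin beta)))
      with (sigma * fst P + s * sin beta * (sigma * sigma)) by ring.
    rewrite Hsg. ring.
  - replace (- sigma * (fst P + s * (sigma * sin beta)))
      with (- sigma * fst P - s * sin beta * (sigma * sigma)) by ring.
    rewrite Hsg. ring.
Qed.

Section HedgeStep.

Variables (alpha beta : R) (x : nat -> R) (k : nat).
Hypothesis Hadm : admissible alpha beta.

Local Notation P := (hedge alpha beta x k).
Local Notation P' := (hedge alpha beta x (S k)).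
Local Notation y := (x (S k)).
Local Notation sg := (sgnR (x (S k))).

Hypothesis Hy : y <> 0.
Hypothesis Hin : in_FC alpha x k P.
Hypothesis Hother : 0 <= edge alpha (- sg) P.

Lemma sgnR_sq : sg * sg = 1.
Proof. destruct (sgnR_cases y Hy) as [[E _]|[E _]]; rewrite E; ring. Qed.

Lemma in_FC_new_request Q : in_FC alpha x k Q -> 0 <= edge alpha (- sg) Q ->
  (in_FC alpha x (S k) Q <-> sg * y <= edge alpha sg Q).
Proof.
  intros HQ HQo. apply in_FC_edges in HQ. destruct HQ as [Hv Hcov].
  split.
  - intros HQ'. apply in_FC_edges in HQ'. destruct HQ' as [_ HQ'].
    specialize (HQ' (S k) (le_n _)).
    destruct (sgnR_cases y Hy) as [[E _]|[E _]]; rewrite E in *; unfold edge in *; lra.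
  - intros Hle. apply in_FC_edges. split; [exact Hv|]. intros j Hj.
    destruct (Nat.eq_dec j (S k)) as [->|]; [| apply Hcov; lia].
    destruct (sgnR_cases y Hy) as [[E Hy']|[E Hy']]; rewrite E in *; unfold edge in *; lra.
Qed.

Lemma hedge_stay : sg * y <= edge alpha sg P -> P' = P.
Proof.
  intros Hle. simpl hedge. destruct (excluded_middle_informative _) as [_ | Hout]; [reflexivity|].
  exfalso. exact (Hout (proj2 (in_FC_new_request P Hin Hother) Hle)).
Qed.

(* [s] is the time at which the leading edge [edge alpha sg] of the drone reaches [sg * y]. *)
Lemma hedge_move : edge alpha sg P < sg * y ->
  let s := (sg * y - edge alpha sg P) / edge_speed alpha beta in
  P' = (fst P + s * (sg * sin beta), snd P + s * cos beta).
Proof.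
  intros Hlt s. pose proof (edge_speed_pos _ _ Hadm) as Hk.
  pose proof (tilt_bounds _ _ Hadm) as Ht. pose proof Hadm as (_ & _ & Hcb & _).
  assert (Hs0 : 0 <= s) by (apply Rle_mult_inv_pos; lra).
  assert (Hray : forall t, 0 <= t ->
            let Q := (fst P + t * (sg * sin beta), snd P + t * cos beta) in
            in_FC alpha x k Q /\ 0 <= edge alpha (- sg) Q /\
            edge alpha sg Q = edge alpha sg P + t * edge_speed alpha beta).
  { intros t Ht0 Q. destruct (edge_along_ray alpha beta sg P t Hadm sgnR_sq) as [Hl Ht'].
    fold Q in Hl, Ht'.
    assert (0 <= t * ((1 - tilt alpha beta) * edge_speed alpha beta))
      by (apply Rmult_le_pos; [lra | apply Rmult_le_pos; lra]).
    split; [| split; [lra | exact Hl]].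
    apply in_FC_edges in Hin. destruct Hin as [Hv Hcov]. apply in_FC_edges. split.
    - unfold Q; cbn [snd]. nra.
    - intros j Hj. specialize (Hcov j Hj).
      destruct (sgnR_cases y Hy) as [[E _]|[E _]]; rewrite E in *;
        replace (- (1)) with (-1) in * by ring; replace (- -1) with 1 in * by ring; nra. }
  simpl hedge. destruct (excluded_middle_informative _) as [Hin' | _].
  { exfalso. apply (in_FC_new_request P Hin Hother) in Hin'. lra. }
  rewrite (real_Glb_Rbar_min _ s); [reflexivity | |].
  - destruct (Hray s Hs0) as (HQ & HQo & HQl). split; [exact Hs0|].
    apply (in_FC_new_request _ HQ HQo). rewrite HQl. unfold s. field_simplify; lra.
  - intros t [Ht0 HQ']. destruct (Hray t Ht0) as (HQ & HQo & HQl).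
    apply (in_FC_new_request _ HQ HQo) in HQ'. rewrite HQl in HQ'.
    apply (Rmult_le_reg_r (edge_speed alpha beta)); [exact Hk|].
    unfold s. field_simplify; lra.
Qed.

Lemma hedge_step :
  edge alpha sg P' = Rmax (edge alpha sg P) (sg * y) /\
  edge alpha (- sg) P' =
    edge alpha (- sg) P + (1 - tilt alpha beta) * Rmax 0 (sg * y - edge alpha sg P) /\
  dist2 P P' = (snd P' - snd P) / cos beta.
Proof.
  pose proof (edge_speed_pos _ _ Hadm) as Hk. pose proof Hadm as (_ & _ & Hcb & _).
  destruct (Rle_lt_dec (sg * y) (edge alpha sg P)) as [Hstay | Hmove].
  - rewrite (hedge_stay Hstay), dist2_self, Rmax_left, Rmax_left by lra.
    split; [reflexivity|]. split; [ring | field; lra].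
  - rewrite (hedge_move Hmove), Rmax_right, Rmax_right by lra.
    set (s := (sg * y - edge alpha sg P) / edge_speed alpha beta).
    assert (Hs0 : 0 <= s) by (apply Rle_mult_inv_pos; lra).
    destruct (edge_along_ray alpha beta sg P s Hadm sgnR_sq) as [Hl Ht]. rewrite Hl, Ht.
    assert (Hunit : (sg * sin beta) ^ 2 + cos beta ^ 2 = 1).
    { replace ((sg * sin beta) ^ 2) with (sg * sg * (sin beta * sin beta)) by ring.
      rewrite sgnR_sq. pose proof (sin2_cos2 beta) as Hsc. unfold Rsqr in Hsc. lra. }
    rewrite dist2_unit_step by assumption. cbn [snd].
    unfold s. split; [| split]; field; lra.
Qed.

End HedgeStep.

Section HedgeStepBySide.

Variables (alpha beta : R) (x : nat -> R) (k : nat).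
Hypothesis Hadm : admissible alpha beta.

Local Notation P := (hedge alpha beta x k).
Local Notation P' := (hedge alpha beta x (S k)).
Local Notation y := (x (S k)).
Local Notation sg := (sgnR (x (S k))).

Lemma hedge_step_right : 0 < y -> in_FC alpha x k P -> 0 <= edge alpha (-1) P ->
  edge alpha 1 P' = Rmax (edge alpha 1 P) y /\
  edge alpha (-1) P' = edge alpha (-1) P + (1 - tilt alpha beta) * Rmax 0 (y - edge alpha 1 P) /\
  dist2 P P' = (snd P' - snd P) / cos beta.
Proof.
  intros Hy Hin Hother.
  assert (Hsg : sg = 1) by (unfold sgnR; destruct (Rlt_dec 0 y); lra).
  assert (Hother' : 0 <= edge alpha (- sg) P)
    by (rewrite Hsg; replace (- (1)) with (-1) by ring; lra).
  destruct (hedge_step alpha beta x k Hadm ltac:(lra) Hin Hother') as (Hu & Hw & Hd).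
  rewrite Hsg, Rmult_1_l in Hu, Hw. replace (- (1)) with (-1) in Hw by ring. auto.
Qed.

Lemma hedge_step_left : y < 0 -> in_FC alpha x k P -> 0 <= edge alpha 1 P ->
  edge alpha (-1) P' = Rmax (edge alpha (-1) P) (- y) /\
  edge alpha 1 P' = edge alpha 1 P + (1 - tilt alpha beta) * Rmax 0 (- y - edge alpha (-1) P) /\
  dist2 P P' = (snd P' - snd P) / cos beta.
Proof.
  intros Hy Hin Hother.
  assert (Hsg : sg = -1)
    by (unfold sgnR; destruct (Rlt_dec 0 y); [lra|]; destruct (Rlt_dec y 0); lra).
  assert (Hother' : 0 <= edge alpha (- sg) P)
    by (rewrite Hsg; replace (- -1) with 1 by ring; lra).
  destruct (hedge_step alpha beta x k Hadm ltac:(lra) Hin Hother') as (Hw & Hu & Hd).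
  rewrite Hsg in Hu, Hw. replace (- -1) with 1 in Hu by ring.
  replace (-1 * y) with (- y) in Hu, Hw by ring. auto.
Qed.

End HedgeStepBySide.

Lemma snd_div_cos_edges alpha beta P : admissible alpha beta ->
  snd P / cos beta =
  (edge alpha 1 P + edge alpha (-1) P) / ((2 - tilt alpha beta) * edge_speed alpha beta).
Proof.
  intros Hadm. pose proof (tilt_mul_edge_speed _ _ Hadm) as Ht.
  destruct Hadm as (HT & Hsb & Hcb & Hba).
  replace ((2 - tilt alpha beta) * edge_speed alpha beta) with (2 * tan alpha * cos beta)
    by (rewrite Rmult_minus_distr_r, Ht; unfold edge_speed; ring).
  unfold edge. field. lra.
Qed.

Fixpoint prefix_max (x : nat -> R) (i : nat) : R :=
  match i with O => x O | S k => Rmax (prefix_max x k) (x (S k)) end.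

Fixpoint prefix_min (x : nat -> R) (i : nat) : R :=
  match i with O => x O | S k => Rmin (prefix_min x k) (x (S k)) end.

Lemma prefix_max_ge x i j : (j <= i)%nat -> x j <= prefix_max x i.
Proof.
  induction i as [|i IH]; intros Hj; simpl.
  - replace j with O by lia. lra.
  - destruct (Nat.eq_dec j (S i)) as [->|]; [apply Rmax_r|].
    eapply Rle_trans; [apply IH; lia | apply Rmax_l].
Qed.

Lemma prefix_min_le x i j : (j <= i)%nat -> prefix_min x i <= x j.
Proof.
  induction i as [|i IH]; intros Hj; simpl.
  - replace j with O by lia. lra.
  - destruct (Nat.eq_dec j (S i)) as [->|]; [apply Rmin_r|].
    eapply Rle_trans; [apply Rmin_l | apply IH; lia].
Qed.

Lemma prefix_max_attained x i : exists j, (j <= i)%nat /\ prefix_max x i = x j.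
Proof.
  induction i as [|i [j [Hj E]]]; [exists O; split; [lia | reflexivity]|]. simpl.
  unfold Rmax. destruct (Rle_dec (prefix_max x i) (x (S i))).
  - exists (S i). split; [lia | reflexivity].
  - exists j. split; [lia | exact E].
Qed.

Lemma prefix_min_attained x i : exists j, (j <= i)%nat /\ prefix_min x i = x j.
Proof.
  induction i as [|i [j [Hj E]]]; [exists O; split; [lia | reflexivity]|]. simpl.
  unfold Rmin. destruct (Rle_dec (prefix_min x i) (x (S i))).
  - exists j. split; [lia | exact E].
  - exists (S i). split; [lia | reflexivity].
Qed.

Section EdgeInvariant.

Variable lam : R.

(* [u], [w]: the two edges of the covered segment; [b], [a]: the right and left extents of
   the requests so far, all measured from the origin. *)
Definition edge_inv (u w b a : R) : Prop :=
  b <= u /\ a <= w /\ 0 <= u - lam * w <= (1 - lam ^ 2) * b /\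
  0 <= w - lam * u <= (1 - lam ^ 2) * a /\ (u = b \/ w = a).

Lemma edge_inv_sym u w b a : edge_inv u w b a -> edge_inv w u a b.
Proof. unfold edge_inv. tauto. Qed.

Hypothesis Hlam : 0 <= lam <= 1.

Lemma edge_inv_step u w b a y : edge_inv u w b a -> b < y ->
  edge_inv (Rmax u y) (w + lam * Rmax 0 (y - u)) y a.
Proof.
  intros (HB & HA & Hu & Hw & Hex) Hy.
  assert (Hl2 : 0 <= 1 - lam ^ 2) by nra.
  destruct (Rle_lt_dec y u) as [Hyu | Hyu].
  - rewrite Rmax_left, Rmax_left by lra.
    assert (w = a) by (destruct Hex; [lra | assumption]).
    unfold edge_inv. repeat split; try lra; nra.
  - rewrite Rmax_right, Rmax_right by lra.
    assert (Hlw : lam * a <= lam * w) by nra.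
    unfold edge_inv. repeat split; try lra; nra.
Qed.

Lemma edge_inv_sum_le u w r : 0 <= r <= 1 -> edge_inv u w r 1 ->
  u + w <= (1 + lam) * (1 + (1 - lam) * r).
Proof. intros Hr (HB & HA & Hu & Hw & [E | E]); subst; nra. Qed.

End EdgeInvariant.

Section HedgeInvariant.

Variables (alpha beta : R) (x : nat -> R) (n : nat).
Hypothesis Hadm : admissible alpha beta.
Hypothesis Hx0 : x O = 0.
Hypothesis Hnr : forall i, (i < n)%nat ->
  (forall j, (j <= i)%nat -> x j < x (S i)) \/ (forall j, (j <= i)%nat -> x (S i) < x j).

Local Notation lam := (1 - tilt alpha beta).
Local Notation P i := (hedge alpha beta x i).

Lemma edge_inv_in_FC i : 0 < tan alpha ->
  edge_inv lam (edge alpha 1 (P i)) (edge alpha (-1) (P i)) (prefix_max x i) (- prefix_min x i) ->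
  in_FC alpha x i (P i).
Proof.
  intros HT (HB & HA & _). pose proof (prefix_max_ge x i O ltac:(lia)).
  pose proof (prefix_min_le x i O ltac:(lia)). apply in_FC_edges. split.
  - rewrite (snd_edges alpha (P i) HT). apply Rle_mult_inv_pos; lra.
  - intros j Hj. pose proof (prefix_max_ge x i j Hj). pose proof (prefix_min_le x i j Hj). lra.
Qed.

Lemma hedge_invariant i : (i <= n)%nat ->
  edge_inv lam (edge alpha 1 (P i)) (edge alpha (-1) (P i)) (prefix_max x i) (- prefix_min x i) /\
  path_cost (hedge alpha beta x) i = snd (P i) / cos beta.
Proof.
  pose proof (tilt_bounds _ _ Hadm) as Ht. assert (Hlam : 0 <= lam <= 1) by lra.
  pose proof Hadm as (HT & _ & Hcb & _).
  induction i as [|i IH]; intros Hi.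
  { unfold edge_inv, edge; simpl. rewrite Hx0. repeat split; lra. }
  destruct (IH ltac:(lia)) as [Hinv Hcost].
  pose proof (edge_inv_in_FC i HT Hinv) as Hin.
  pose proof Hinv as (HB & HA & _).
  pose proof (prefix_max_ge x i O ltac:(lia)). pose proof (prefix_min_le x i O ltac:(lia)).
  assert (Hcost' : dist2 (P i) (P (S i)) = (snd (P (S i)) - snd (P i)) / cos beta ->
            path_cost (hedge alpha beta x) (S i) = snd (P (S i)) / cos beta).
  { intros Hd. cbn [path_cost]. rewrite Hcost, Hd. field. lra. }
  destruct (Hnr i ltac:(lia)) as [Hright | Hleft].
  - destruct (prefix_max_attained x i) as [j [Hj E]].
    pose proof (Hright j Hj) as Hy. rewrite <- E in Hy.
    destruct (hedge_step_right alpha beta x i Hadm ltac:(lra) Hin ltac:(lra)) as (Hu & Hw & Hd).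
    split; [| exact (Hcost' Hd)].
    simpl prefix_max. simpl prefix_min. rewrite Rmax_right, Rmin_left by lra.
    rewrite Hu, Hw. exact (edge_inv_step lam Hlam _ _ _ _ _ Hinv Hy).
  - destruct (prefix_min_attained x i) as [j [Hj E]].
    pose proof (Hleft j Hj) as Hy. rewrite <- E in Hy.
    destruct (hedge_step_left alpha beta x i Hadm ltac:(lra) Hin ltac:(lra)) as (Hw & Hu & Hd).
    split; [| exact (Hcost' Hd)].
    simpl prefix_max. simpl prefix_min. rewrite Rmax_left, Rmin_right by lra.
    rewrite Hu, Hw. apply edge_inv_sym.
    refine (edge_inv_step lam Hlam _ _ _ _ _ (edge_inv_sym _ _ _ _ _ Hinv) _). lra.
Qed.

End HedgeInvariant.

Lemma prefix_max_extent n x r : good_input_r n x r -> prefix_max x n = r.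
Proof.
  intros (_ & _ & _ & _ & _ & (j & Hj & E) & Hhi & _).
  destruct (prefix_max_attained x n) as [k [Hk Ek]].
  pose proof (prefix_max_ge x n j Hj). specialize (Hhi k Hk). lra.
Qed.

Lemma prefix_min_extent n x r : good_input_r n x r -> prefix_min x n = -1.
Proof.
  intros (_ & _ & _ & (j & Hj & E) & Hlo & _).
  destruct (prefix_min_attained x n) as [k [Hk Ek]].
  pose proof (prefix_min_le x n j Hj). specialize (Hlo k Hk). lra.
Qed.

Lemma ALG_hedge_le alpha beta n x r : admissible alpha beta -> good_input_r n x r ->
  ALG_hedge alpha beta n x <= (1 + tilt alpha beta * r) / edge_speed alpha beta.
Proof.
  intros Hadm G. pose proof G as (_ & Hx0 & Hnr & _ & _ & _ & _ & Hr).
  pose proof (tilt_bounds _ _ Hadm) as Ht. pose proof (edge_speed_pos _ _ Hadm) as Hk.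
  destruct (hedge_invariant alpha beta x n Hadm Hx0 Hnr n (le_n n)) as [Hinv Hcost].
  rewrite (prefix_max_extent n x r G), (prefix_min_extent n x r G) in Hinv.
  replace (- -1) with 1 in Hinv by ring.
  unfold ALG_hedge. rewrite Hcost, (snd_div_cos_edges alpha beta) by exact Hadm.
  apply edge_inv_sum_le in Hinv; [| lra | exact Hr].
  replace ((1 + tilt alpha beta * r) / edge_speed alpha beta) with
    ((1 + (1 - tilt alpha beta)) * (1 + (1 - (1 - tilt alpha beta)) * r)
       / ((2 - tilt alpha beta) * edge_speed alpha beta)) by (field; lra).
  apply Rmult_le_compat_r; [| exact Hinv].
  apply Rlt_le, Rinv_0_lt_compat, Rmult_lt_0_compat; lra.
Qed.

Definition one_request : nat -> R := fun i => match i with O => 0 | _ => -1 end.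

Definition two_requests (r : R) : nat -> R :=
  fun i => match i with O => 0 | 1%nat => r | _ => -1 end.

Lemma one_request_good : good_input_r 1 one_request 0.
Proof.
  repeat split; try lra; [lia | ..].
  - intros [|i] Hi; [right | lia]. intros j Hj. replace j with O by lia. simpl. lra.
  - exists 1%nat. split; [lia | reflexivity].
  - intros [|j] Hj; simpl; lra.
  - exists O. split; [lia | reflexivity].
  - intros [|j] Hj; simpl; lra.
Qed.

Lemma two_requests_good r : 0 < r <= 1 -> good_input_r 2 (two_requests r) r.
Proof.
  intros Hr. repeat split; try lra; [lia | ..].
  - intros [|[|i]] Hi; [left | right | lia]; intros [|[|j]] Hj; simpl; lra || lia.
  - exists 2%nat. split; [lia | reflexivity].
  - intros [|[|j]] Hj; simpl; lra.
  - exists 1%nat. split; [lia | reflexivity].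
  - intros [|[|j]] Hj; simpl; lra.
Qed.

Lemma in_FC_origin alpha beta x : x O = 0 -> in_FC alpha x 0 (hedge alpha beta x 0).
Proof.
  intros Hx0. split; simpl; [lra|]. intros j Hj. replace j with O by lia.
  rewrite Hx0, Rminus_0_r, Rabs_R0. lra.
Qed.

Lemma edge_hedge_0 alpha beta x sigma : edge alpha sigma (hedge alpha beta x 0) = 0.
Proof. unfold edge. simpl. ring. Qed.

Lemma ALG_hedge_one_request alpha beta : admissible alpha beta ->
  ALG_hedge alpha beta 1 one_request = / edge_speed alpha beta.
Proof.
  intros Hadm. pose proof one_request_good as (_ & Hx0 & Hnr & _).
  pose proof (tilt_bounds _ _ Hadm). pose proof (edge_speed_pos _ _ Hadm).
  destruct (hedge_invariant alpha beta one_request 1 Hadm Hx0 Hnr 1 (le_n 1)) as [_ Hcost].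
  destruct (hedge_step_left alpha beta one_request 0 Hadm ltac:(simpl; lra)
              (in_FC_origin _ _ _ Hx0) ltac:(rewrite edge_hedge_0; lra)) as (Hw & Hu & _).
  unfold ALG_hedge. rewrite Hcost, (snd_div_cos_edges alpha beta) by exact Hadm.
  rewrite Hu, Hw, !edge_hedge_0. simpl one_request. rewrite Rmax_right, Rmax_right by lra.
  field. lra.
Qed.

Lemma ALG_hedge_two_requests alpha beta r : admissible alpha beta -> 0 < r <= 1 ->
  ALG_hedge alpha beta 2 (two_requests r) = (1 + tilt alpha beta * r) / edge_speed alpha beta.
Proof.
  intros Hadm Hr. pose proof (two_requests_good r Hr) as (_ & Hx0 & Hnr & _).
  pose proof (tilt_bounds _ _ Hadm). pose proof (edge_speed_pos _ _ Hadm).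
  pose proof Hadm as (HT & _).
  destruct (hedge_invariant alpha beta (two_requests r) 2 Hadm Hx0 Hnr 2 (le_n 2)) as [_ Hcost].
  destruct (hedge_step_right alpha beta (two_requests r) 0 Hadm ltac:(simpl; lra)
              (in_FC_origin _ _ _ Hx0) ltac:(rewrite edge_hedge_0; lra)) as (Hu1 & Hw1 & _).
  rewrite edge_hedge_0 in Hu1, Hw1. rewrite edge_hedge_0 in Hw1.
  change (two_requests r 1) with r in Hu1, Hw1.
  rewrite Rmax_right in Hu1, Hw1 by lra.
  assert (Hin1 : in_FC alpha (two_requests r) 1 (hedge alpha beta (two_requests r) 1)).
  { apply in_FC_edges. rewrite (snd_edges alpha _ HT), Hu1, Hw1. split.
    - apply Rle_mult_inv_pos; nra.
    - intros [|[|j]] Hj; simpl; [nra | nra | lia]. }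
  destruct (hedge_step_left alpha beta (two_requests r) 1 Hadm ltac:(simpl; lra)
              Hin1 ltac:(lra)) as (Hw2 & Hu2 & _).
  change (two_requests r 2) with (-1) in Hw2, Hu2. rewrite Hu1, Hw1 in *.
  rewrite Rmax_right in Hw2 by nra. rewrite Rmax_right in Hu2 by nra.
  unfold ALG_hedge. rewrite Hcost, (snd_div_cos_edges alpha beta) by exact Hadm.
  rewrite Hu2, Hw2. field. lra.
Qed.

Definition ratio_num_sq (T mu : R) : R := (1 - mu) ^ 2 + T ^ 2 * (1 + mu) ^ 2.

Lemma ratio_num_sq_nonneg T mu : 0 <= ratio_num_sq T mu.
Proof.
  unfold ratio_num_sq.
  apply Rplus_le_le_0_compat; [| apply Rmult_le_pos]; apply pow2_ge_0.
Qed.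

Definition hedge_rho (alpha beta : R) : R :=
  sqrt (ratio_num_sq (tan alpha) (tilt alpha beta)) / edge_speed alpha beta.

(* The paper's [r0], written with [T = tan alpha] and [mu = A]. *)
Definition worst_extent (T mu : R) : R :=
  (mu * (1 + T ^ 2) - (1 - T ^ 2)) / ((1 + T ^ 2) - mu * (1 - T ^ 2)).

Lemma apex_ratio_gap T mu r : 0 < T ->
  ratio_num_sq T mu * apex_sq_dist T r - (1 + mu * r) ^ 2 =
  (r * ((1 + T ^ 2) - mu * (1 - T ^ 2)) - (mu * (1 + T ^ 2) - (1 - T ^ 2))) ^ 2 / (4 * T ^ 2).
Proof. intros HT. unfold ratio_num_sq, apex_sq_dist. field. lra. Qed.

Lemma apex_ratio_le T mu r : 0 < T -> (1 + mu * r) ^ 2 <= ratio_num_sq T mu * apex_sq_dist T r.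
Proof.
  intros HT. pose proof (apex_ratio_gap T mu r HT) as E.
  assert (0 <= (r * ((1 + T ^ 2) - mu * (1 - T ^ 2)) - (mu * (1 + T ^ 2) - (1 - T ^ 2))) ^ 2
               / (4 * T ^ 2)) by (apply Rle_mult_inv_pos; [apply pow2_ge_0 | nra]).
  lra.
Qed.

Lemma halfplane_ratio_le T mu r : 0 <= mu <= 1 -> 0 <= r -> r * (1 + T ^ 2) < T ^ 2 - 1 ->
  (1 + mu * r) ^ 2 <= ratio_num_sq T mu * / (1 + T ^ 2).
Proof.
  intros Hmu Hr Hc.
  assert (HT2 : 0 < 1 + T ^ 2) by nra.
  assert (Hlin : 0 <= (1 + mu * r) * (1 + T ^ 2) <= 1 + T ^ 2 + mu * (T ^ 2 - 1)) by nra.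
  assert (E : ratio_num_sq T mu * (1 + T ^ 2) =
              (1 + T ^ 2 + mu * (T ^ 2 - 1)) ^ 2 + 4 * T ^ 2 * mu ^ 2)
    by (unfold ratio_num_sq; ring).
  apply (Rmult_le_reg_r ((1 + T ^ 2) ^ 2)); [nra|].
  replace (ratio_num_sq T mu * / (1 + T ^ 2) * (1 + T ^ 2) ^ 2)
    with (ratio_num_sq T mu * (1 + T ^ 2)) by (field; lra).
  rewrite E. pose proof (pow2_ge_0 (T * mu)). nra.
Qed.

Lemma le_sqrt_mul X N D : 0 <= X -> 0 <= N -> 0 <= D -> X ^ 2 <= N * D -> X <= sqrt N * sqrt D.
Proof.
  intros HX HN HD H. rewrite <- sqrt_mult by assumption. rewrite <- (sqrt_pow2 X HX).
  apply sqrt_le_1_alt. exact H.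
Qed.

Lemma le_of_sq_le x y : 0 <= y -> x ^ 2 <= y ^ 2 -> x <= y.
Proof. intros Hy H. destruct (Rle_lt_dec x y); [assumption | nra]. Qed.

Lemma hedge_ratio_le alpha beta n x : admissible alpha beta -> good_input n x ->
  ALG_hedge alpha beta n x / OPT alpha n x <= hedge_rho alpha beta.
Proof.
  intros Hadm [r G].
  pose proof (ALG_hedge_le alpha beta n x r Hadm G) as HA.
  pose proof (tilt_bounds _ _ Hadm) as Hmu. pose proof (edge_speed_pos _ _ Hadm) as Hk.
  pose proof Hadm as (HT & _). pose proof G as (_ & _ & _ & _ & _ & _ & _ & Hr).
  set (T := tan alpha) in *. set (mu := tilt alpha beta) in *.
  pose proof (ratio_num_sq_nonneg T mu) as HN.
  assert (HO0 : 0 < sqrt (/ (1 + T ^ 2))) by (apply sqrt_lt_R0, Rinv_0_lt_compat; nra).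
  pose proof (OPT_ge_halfplane alpha n x r HT G) as HO. fold T in HO.
  assert (Hnum : 1 + mu * r <= sqrt (ratio_num_sq T mu) * OPT alpha n x).
  { destruct (Rle_lt_dec (T ^ 2 - 1) (r * (1 + T ^ 2))) as [Hc | Hc].
    - rewrite (OPT_apex alpha n x r HT G Hc).
      apply le_sqrt_mul; [nra | exact HN | | apply apex_ratio_le; exact HT].
      left. apply apex_sq_dist_pos, HT.
    - apply Rle_trans with (sqrt (ratio_num_sq T mu) * sqrt (/ (1 + T ^ 2))).
      + apply le_sqrt_mul; [nra | exact HN | left; apply Rinv_0_lt_compat; nra |].
        apply halfplane_ratio_le; lra.
      + apply Rmult_le_compat_l; [apply sqrt_pos | exact HO]. }
  unfold hedge_rho. fold T mu.
  apply Rle_trans with ((1 + mu * r) / edge_speed alpha beta / OPT alpha n x).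
  - apply Rmult_le_compat_r; [apply Rlt_le, Rinv_0_lt_compat; lra | exact HA].
  - unfold Rdiv. rewrite Rmult_assoc, (Rmult_comm (/ _)), <- Rmult_assoc.
    apply Rmult_le_compat_r; [apply Rlt_le, Rinv_0_lt_compat; lra|].
    apply (Rmult_le_reg_r (OPT alpha n x)); [lra|].
    rewrite Rmult_assoc, Rinv_l by lra. lra.
Qed.

Lemma worst_extent_spec T mu : 0 < T -> 0 <= mu <= 1 -> 1 - T ^ 2 < mu * (1 + T ^ 2) ->
  0 < worst_extent T mu <= 1 /\ T ^ 2 - 1 <= worst_extent T mu * (1 + T ^ 2) /\
  worst_extent T mu * ((1 + T ^ 2) - mu * (1 - T ^ 2)) = mu * (1 + T ^ 2) - (1 - T ^ 2).
Proof.
  intros HT Hmu Hc.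
  assert (HD : 0 < (1 + T ^ 2) - mu * (1 - T ^ 2)) by (destruct (Rle_lt_dec 0 (1 - T ^ 2)); nra).
  assert (E : worst_extent T mu * ((1 + T ^ 2) - mu * (1 - T ^ 2)) = mu * (1 + T ^ 2) - (1 - T ^ 2))
    by (unfold worst_extent; field; lra).
  repeat split; [| | | exact E].
  - unfold worst_extent. apply Rdiv_lt_0_compat; lra.
  - apply (Rmult_le_reg_r _ _ _ HD). rewrite E. nra.
  - apply (Rmult_le_reg_r _ _ _ HD).
    rewrite Rmult_assoc, (Rmult_comm (1 + T ^ 2)), <- Rmult_assoc, E.
    nra.
Qed.

Lemma hedge_ratio_worst alpha beta : admissible alpha beta ->
  1 - tan alpha ^ 2 < tilt alpha beta * (1 + tan alpha ^ 2) ->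
  let r := worst_extent (tan alpha) (tilt alpha beta) in
  good_input_r 2 (two_requests r) r /\
  ALG_hedge alpha beta 2 (two_requests r) / OPT alpha 2 (two_requests r) = hedge_rho alpha beta.
Proof.
  intros Hadm Hc r.
  pose proof (tilt_bounds _ _ Hadm) as Hmu. pose proof (edge_speed_pos _ _ Hadm) as Hk.
  pose proof Hadm as (HT & _).
  destruct (worst_extent_spec _ _ HT Hmu Hc) as (Hr & Hrc & Hre). fold r in Hr, Hrc, Hre.
  pose proof (two_requests_good r Hr) as G. split; [exact G|].
  rewrite (ALG_hedge_two_requests alpha beta r Hadm Hr), (OPT_apex alpha 2 _ r HT G Hrc).
  pose proof (apex_ratio_gap (tan alpha) (tilt alpha beta) r HT) as Hgap.
  rewrite Hre, Rminus_diag, pow_i, Rdiv_0_l in Hgap by lia.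
  set (N := ratio_num_sq (tan alpha) (tilt alpha beta)) in *.
  set (D := apex_sq_dist (tan alpha) r) in *.
  assert (HN : 0 <= N) by apply ratio_num_sq_nonneg.
  assert (HD : 0 < D) by (apply apex_sq_dist_pos, HT).
  assert (Hsq : sqrt N * sqrt D = 1 + tilt alpha beta * r).
  { rewrite <- sqrt_mult by lra. replace (N * D) with ((1 + tilt alpha beta * r) ^ 2) by lra.
    apply sqrt_pow2. nra. }
  pose proof (sqrt_lt_R0 D HD).
  unfold hedge_rho. fold N. rewrite <- Hsq. field. lra.
Qed.

Lemma hedge_ratio_one_request alpha beta : admissible alpha beta -> tan alpha <= 1 ->
  ALG_hedge alpha beta 1 one_request / OPT alpha 1 one_request =
  / (edge_speed alpha beta * sqrt (apex_sq_dist (tan alpha) 0)).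
Proof.
  intros Hadm HT1. pose proof Hadm as (HT & _). pose proof (edge_speed_pos _ _ Hadm).
  rewrite ALG_hedge_one_request, (OPT_apex alpha 1 one_request 0 HT one_request_good)
    by (nra || auto).
  assert (0 < sqrt (apex_sq_dist (tan alpha) 0)) by (apply sqrt_lt_R0, apex_sq_dist_pos, HT).
  field. lra.
Qed.

Lemma comp_ratio_hedge alpha beta : admissible alpha beta ->
  1 - tan alpha ^ 2 < tilt alpha beta * (1 + tan alpha ^ 2) ->
  comp_ratio alpha beta = hedge_rho alpha beta /\
  comp_ratio_r alpha beta (worst_extent (tan alpha) (tilt alpha beta)) = hedge_rho alpha beta.
Proof.
  intros Hadm Hc. destruct (hedge_ratio_worst alpha beta Hadm Hc) as [G Hq].
  set (r := worst_extent (tan alpha) (tilt alpha beta)) in *.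
  split; apply Lub_Rbar_max.
  - exists 2%nat, (two_requests r). split; [exists r; exact G | symmetry; exact Hq].
  - intros q (n & x & Gx & ->). exact (hedge_ratio_le alpha beta n x Hadm Gx).
  - exists 2%nat, (two_requests r). split; [exact G | symmetry; exact Hq].
  - intros q (n & x & Gx & ->). exact (hedge_ratio_le alpha beta n x Hadm (ex_intro _ _ Gx)).
Qed.

Lemma comp_ratio_ge_one_request alpha beta : admissible alpha beta -> tan alpha <= 1 ->
  Rbar_le (/ (edge_speed alpha beta * sqrt (apex_sq_dist (tan alpha) 0))) (comp_ratio alpha beta).
Proof.
  intros Hadm HT1. apply (Lub_Rbar_ge _ _ _ (ex_intro _ 1%nat (ex_intro _ one_request
    (conj (ex_intro _ 0 one_request_good) eq_refl)))).
  rewrite hedge_ratio_one_request by assumption. lra.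
Qed.

Definition tilt_K (T mu : R) : R := T ^ 2 * mu ^ 2 + (2 - mu) ^ 2.

Definition tilt_poly (c mu : R) : R :=
  (mu ^ 2 - 2 * c * mu + 1) * (mu ^ 2 - 2 * (1 + c) * mu + 2 * (1 + c)).

Definition best_tilt (c : R) : R := Rmax 0 (Rmin 1 (/ 2 + c)).

Lemma edge_speed_sq_mul_tilt_K alpha beta : admissible alpha beta ->
  edge_speed alpha beta ^ 2 * tilt_K (tan alpha) (tilt alpha beta) = 4 * tan alpha ^ 2.
Proof.
  intros Hadm. pose proof (edge_speed_pos _ _ Hadm) as Hk.
  pose proof (sin2_cos2 beta) as Hsc. unfold Rsqr in Hsc.
  unfold tilt_K, tilt. unfold edge_speed in *.
  replace (4 * tan alpha ^ 2) with (4 * tan alpha ^ 2 * (sin beta * sin beta + cos beta * cos beta))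
    by (rewrite Hsc; ring).
  field. lra.
Qed.

Lemma hedge_rho_sq alpha beta : admissible alpha beta ->
  hedge_rho alpha beta ^ 2 =
  ratio_num_sq (tan alpha) (tilt alpha beta) * tilt_K (tan alpha) (tilt alpha beta)
  / (4 * tan alpha ^ 2).
Proof.
  intros Hadm. pose proof (edge_speed_pos _ _ Hadm). pose proof Hadm as (HT & _).
  rewrite <- (edge_speed_sq_mul_tilt_K alpha beta Hadm).
  assert (HKpos : 0 < tilt_K (tan alpha) (tilt alpha beta)).
  { pose proof (edge_speed_sq_mul_tilt_K alpha beta Hadm). unfold tilt_K in *. nra. }
  unfold hedge_rho. unfold Rdiv. rewrite Rpow_mult_distr, pow2_sqrt.
  - rewrite pow_inv. field. lra.
  - apply ratio_num_sq_nonneg.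
Qed.

Lemma ratio_num_sq_mul_tilt_K T mu : 0 < T ->
  ratio_num_sq T mu * tilt_K T mu = (1 + T ^ 2) ^ 2 * tilt_poly ((1 - T ^ 2) / (1 + T ^ 2)) mu.
Proof. intros HT. unfold ratio_num_sq, tilt_K, tilt_poly. field. nra. Qed.

Lemma ratio_num_sq_at_cos2 T : 0 < T ->
  ratio_num_sq T ((1 - T ^ 2) / (1 + T ^ 2)) * (1 + T ^ 2) = 4 * T ^ 2.
Proof. intros HT. unfold ratio_num_sq. field. nra. Qed.

Lemma tilt_K_antitone T mu : 0 < T -> 0 <= mu -> mu * (1 + T ^ 2) <= 1 - T ^ 2 ->
  tilt_K T ((1 - T ^ 2) / (1 + T ^ 2)) <= tilt_K T mu.
Proof.
  intros HT Hmu H. set (c := (1 - T ^ 2) / (1 + T ^ 2)).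
  assert (Hc : c * (1 + T ^ 2) = 1 - T ^ 2) by (unfold c; field; nra).
  assert (E : tilt_K T mu - tilt_K T c = (mu - c) * ((1 + T ^ 2) * (mu + c) - 4))
    by (unfold tilt_K; ring).
  assert (mu <= c) by (apply (Rmult_le_reg_r (1 + T ^ 2)); nra).
  nra.
Qed.

Lemma tilt_poly_sub c mu mu' :
  tilt_poly c mu - tilt_poly c mu' =
  ((mu - / 2 - c) ^ 2 - (mu' - / 2 - c) ^ 2) *
  ((mu - / 2 - c) ^ 2 + (mu' - / 2 - c) ^ 2 + 3 / 2 - 2 * c ^ 2).
Proof. unfold tilt_poly. field. Qed.

Lemma best_tilt_hi c : / 2 <= c -> best_tilt c = 1.
Proof. intros Hc. unfold best_tilt. rewrite Rmin_left, Rmax_right; lra. Qed.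

Lemma best_tilt_mid c : - / 2 <= c <= / 2 -> best_tilt c = / 2 + c.
Proof. intros Hc. unfold best_tilt. rewrite Rmin_right, Rmax_right; lra. Qed.

Lemma best_tilt_lo c : c <= - / 2 -> best_tilt c = 0.
Proof. intros Hc. unfold best_tilt. rewrite Rmin_right, Rmax_left; lra. Qed.

Lemma best_tilt_gt c : -1 < c < 1 -> c < best_tilt c.
Proof.
  intros Hc. destruct (Rle_lt_dec (/ 2) c); [rewrite best_tilt_hi; lra|].
  destruct (Rle_lt_dec c (- / 2)); [rewrite best_tilt_lo; lra | rewrite best_tilt_mid; lra].
Qed.

Lemma tilt_poly_best c mu : -1 < c < 1 -> 0 <= mu <= 1 ->
  tilt_poly c (best_tilt c) <= tilt_poly c mu.
Proof.
  intros Hc Hmu. pose proof (tilt_poly_sub c mu (best_tilt c)) as E.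
  assert (Hb : (best_tilt c - / 2 - c) ^ 2 <= (mu - / 2 - c) ^ 2 /\
               0 <= (mu - / 2 - c) ^ 2 + (best_tilt c - / 2 - c) ^ 2 + 3 / 2 - 2 * c ^ 2).
  { pose proof (pow2_ge_0 (mu - / 2 - c)).
    destruct (Rle_lt_dec (/ 2) c); [rewrite best_tilt_hi; [split; nra | lra]|].
    destruct (Rle_lt_dec c (- / 2)); [rewrite best_tilt_lo; [split; nra | lra]|].
    rewrite best_tilt_mid by lra. split; nra. }
  destruct Hb as [Hb1 Hb2].
  assert (0 <= ((mu - / 2 - c) ^ 2 - (best_tilt c - / 2 - c) ^ 2) *
               ((mu - / 2 - c) ^ 2 + (best_tilt c - / 2 - c) ^ 2 + 3 / 2 - 2 * c ^ 2))
    by (apply Rmult_le_pos; lra).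
  lra.
Qed.

Lemma cos2_of_tan_bounds T : 0 < T -> -1 < (1 - T ^ 2) / (1 + T ^ 2) < 1.
Proof.
  intros HT. split; apply (Rmult_lt_reg_r (1 + T ^ 2)); try nra;
    unfold Rdiv; rewrite Rmult_assoc, Rinv_l by nra; nra.
Qed.

Lemma best_tilt_gap T : 0 < T ->
  1 - T ^ 2 < best_tilt ((1 - T ^ 2) / (1 + T ^ 2)) * (1 + T ^ 2).
Proof.
  intros HT. pose proof (best_tilt_gt _ (cos2_of_tan_bounds T HT)) as Hgt.
  apply (Rmult_lt_compat_r (1 + T ^ 2)) in Hgt; [| nra].
  replace ((1 - T ^ 2) / (1 + T ^ 2) * (1 + T ^ 2)) with (1 - T ^ 2) in Hgt by (field; nra).
  exact Hgt.
Qed.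

Lemma hedge_rho_best alpha beta0 beta : admissible alpha beta0 -> admissible alpha beta ->
  tilt alpha beta0 = best_tilt ((1 - tan alpha ^ 2) / (1 + tan alpha ^ 2)) ->
  Rbar_le (hedge_rho alpha beta0) (comp_ratio alpha beta).
Proof.
  intros Hadm0 Hadm Hbest. pose proof Hadm as (HT & _).
  pose proof (tilt_bounds _ _ Hadm) as Hmu. pose proof (edge_speed_pos _ _ Hadm) as Hk.
  set (T := tan alpha) in *. set (c := (1 - T ^ 2) / (1 + T ^ 2)) in *.
  pose proof (cos2_of_tan_bounds T HT) as Hc. fold c in Hc.
  assert (Hrho0 : 0 <= hedge_rho alpha beta0)
    by (apply Rle_mult_inv_pos; [apply sqrt_pos | apply edge_speed_pos, Hadm0]).
  assert (Hsq0 : hedge_rho alpha beta0 ^ 2 =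
                 (1 + T ^ 2) ^ 2 * tilt_poly c (best_tilt c) / (4 * T ^ 2))
    by (rewrite hedge_rho_sq, ratio_num_sq_mul_tilt_K, Hbest by assumption; reflexivity).
  assert (HT2 : 0 < 4 * T ^ 2) by nra.
  destruct (Rlt_le_dec (1 - T ^ 2) (tilt alpha beta * (1 + T ^ 2))) as [Hw | Hw].
  - rewrite (proj1 (comp_ratio_hedge alpha beta Hadm Hw)). simpl.
    apply le_of_sq_le; [apply Rle_mult_inv_pos; [apply sqrt_pos | exact Hk]|].
    rewrite Hsq0, hedge_rho_sq, ratio_num_sq_mul_tilt_K by assumption. fold T c.
    apply Rmult_le_compat_r; [apply Rlt_le, Rinv_0_lt_compat, HT2|].
    apply Rmult_le_compat_l; [nra | apply tilt_poly_best; assumption].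
  - assert (HT1 : T <= 1) by nra.
    assert (Hc0 : 0 <= c) by (unfold c; apply Rle_mult_inv_pos; nra).
    assert (Hcc : c * (1 + T ^ 2) = 1 - T ^ 2) by (unfold c; field; nra).
    pose proof (apex_sq_dist_pos T 0 HT) as Hapex.
    apply Rbar_le_trans with (/ (edge_speed alpha beta * sqrt (apex_sq_dist T 0))).
    2: exact (comp_ratio_ge_one_request alpha beta Hadm HT1).
    simpl. apply le_of_sq_le.
    { apply Rlt_le, Rinv_0_lt_compat, Rmult_lt_0_compat; [exact Hk | apply sqrt_lt_R0, Hapex]. }
    rewrite Hsq0, pow_inv, Rpow_mult_distr, pow2_sqrt by lra.
    pose proof (edge_speed_sq_mul_tilt_K alpha beta Hadm) as HK. fold T in HK.
    pose proof (tilt_K_antitone T (tilt alpha beta) HT (proj1 Hmu) Hw) as Hmono. fold c in Hmono.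
    pose proof (tilt_poly_best c c Hc ltac:(lra)) as Hbest_c.
    pose proof (ratio_num_sq_mul_tilt_K T c HT) as Hcc2. fold c in Hcc2.
    pose proof (ratio_num_sq_at_cos2 T HT) as Hnc. fold c in Hnc.
    assert (HKpos : 0 < tilt_K T (tilt alpha beta)) by nra.
    apply Rle_trans with (tilt_K T c / (1 + T ^ 2)).
    + replace (tilt_K T c / (1 + T ^ 2)) with ((1 + T ^ 2) ^ 2 * tilt_poly c c / (4 * T ^ 2)).
      * apply Rmult_le_compat_r; [apply Rlt_le, Rinv_0_lt_compat, HT2|].
        apply Rmult_le_compat_l; [nra | exact Hbest_c].
      * rewrite <- Hcc2.
        replace (ratio_num_sq T c) with (4 * T ^ 2 / (1 + T ^ 2)) by (rewrite <- Hnc; field; nra).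
        field. nra.
    + replace (/ (edge_speed alpha beta ^ 2 * apex_sq_dist T 0))
        with (tilt_K T (tilt alpha beta) / (1 + T ^ 2)).
      * apply Rmult_le_compat_r; [apply Rlt_le, Rinv_0_lt_compat; nra | exact Hmono].
      * unfold apex_sq_dist. rewrite <- HK. field. repeat split; nra.
Qed.

Lemma trig_tan_facts alpha : 0 < alpha < PI / 2 ->
  0 < cos alpha /\ 0 < sin alpha /\ 0 < tan alpha /\
  cos (2 * alpha) = (1 - tan alpha ^ 2) / (1 + tan alpha ^ 2) /\
  sin alpha ^ 2 = tan alpha ^ 2 / (1 + tan alpha ^ 2).
Proof.
  intros Ha.
  assert (Hc : 0 < cos alpha) by (apply cos_gt_0; lra).
  assert (Hs : 0 < sin alpha) by (apply sin_gt_0; lra).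
  pose proof (sin2_cos2 alpha) as Hsc. unfold Rsqr in Hsc.
  assert (HT : 0 < tan alpha) by (apply Rdiv_lt_0_compat; assumption).
  assert (Hsc' : cos alpha ^ 2 + sin alpha ^ 2 = 1) by lra.
  repeat split; try assumption.
  - rewrite cos_2a.
    transitivity ((cos alpha ^ 2 - sin alpha ^ 2) / (cos alpha ^ 2 + sin alpha ^ 2));
      [rewrite Hsc'; field | unfold tan; field; split; lra].
  - transitivity (sin alpha ^ 2 / (cos alpha ^ 2 + sin alpha ^ 2));
      [rewrite Hsc'; field | unfold tan; field; split; lra].
Qed.

Lemma admissible_of_le alpha beta : 0 < alpha < PI / 2 -> 0 <= beta <= alpha ->
  admissible alpha beta.
Proof.
  intros Ha Hb. pose proof PI_RGT_0.
  assert (Hca : 0 < cos alpha) by (apply cos_gt_0; lra).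
  assert (Hd : 0 <= sin (alpha - beta)) by (apply sin_ge_0; lra).
  rewrite sin_minus in Hd.
  repeat split.
  - apply Rdiv_lt_0_compat; [apply sin_gt_0 |]; lra.
  - apply sin_ge_0; lra.
  - apply cos_gt_0; lra.
  - unfold tan. apply (Rmult_le_reg_r (cos alpha)); [lra|].
    replace (sin alpha / cos alpha * cos beta * cos alpha) with (sin alpha * cos beta)
      by (field; lra).
    lra.
Qed.

Lemma edge_speed_eq alpha beta : admissible alpha beta ->
  cos beta * (tan alpha + tan beta) = edge_speed alpha beta.
Proof. intros (_ & _ & Hcb & _). unfold edge_speed, tan at 2. field. lra. Qed.

Lemma tilt_eq alpha beta : admissible alpha beta ->
  2 * tan beta / (tan alpha + tan beta) = tilt alpha beta.
Proof.
  intros Hadm. pose proof (edge_speed_pos _ _ Hadm). pose proof (edge_speed_eq _ _ Hadm).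
  pose proof Hadm as (_ & _ & Hcb & _).
  assert (tan alpha + tan beta = edge_speed alpha beta / cos beta) by (field_simplify_eq; lra).
  unfold tilt. rewrite H1. unfold tan. field. lra.
Qed.

Lemma r0_eq_worst_extent alpha beta : 0 < alpha < PI / 2 -> admissible alpha beta ->
  r0 alpha beta = worst_extent (tan alpha) (tilt alpha beta).
Proof.
  intros Ha Hadm. destruct (trig_tan_facts alpha Ha) as (_ & _ & HT & Hc2 & _).
  pose proof (tilt_bounds _ _ Hadm) as Hmu.
  unfold r0. rewrite tilt_eq, Hc2 by exact Hadm. unfold worst_extent.
  assert (0 < (1 + tan alpha ^ 2) - tilt alpha beta * (1 - tan alpha ^ 2))
    by (destruct (Rle_lt_dec 0 (1 - tan alpha ^ 2)); nra).
  field. split; nra.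
Qed.

Lemma f1_r0_eq_hedge_rho alpha beta : 0 < alpha < PI / 2 -> admissible alpha beta ->
  f1 alpha beta (r0 alpha beta) = hedge_rho alpha beta.
Proof.
  intros Ha Hadm. destruct (trig_tan_facts alpha Ha) as (_ & Hsa & HT & Hc2 & Hs2).
  pose proof (tilt_bounds _ _ Hadm) as Hmu. pose proof (edge_speed_pos _ _ Hadm) as Hk.
  rewrite r0_eq_worst_extent by assumption.
  unfold f1, hedge_rho. rewrite tilt_eq, edge_speed_eq, Hc2 by exact Hadm.
  set (mu := tilt alpha beta) in *. set (T := tan alpha) in *.
  assert (HD : 0 < (1 + T ^ 2) - mu * (1 - T ^ 2)) by (destruct (Rle_lt_dec 0 (1 - T ^ 2)); nra).
  assert (HN : 0 < ratio_num_sq T mu).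
  { unfold ratio_num_sq. pose proof (pow2_ge_0 (1 - mu)).
    assert (0 < T ^ 2 * (1 + mu) ^ 2) by (apply Rmult_lt_0_compat; apply pow_lt; lra). lra. }
  pose proof (sqrt_lt_R0 _ HN) as HsN. pose proof (pow2_sqrt _ (Rlt_le _ _ HN)) as HsN2.
  assert (EY : 1 + mu * worst_extent T mu =
               ratio_num_sq T mu / ((1 + T ^ 2) - mu * (1 - T ^ 2)))
    by (unfold worst_extent, ratio_num_sq; field; lra).
  assert (EQ : 1 + worst_extent T mu ^ 2 + 2 * ((1 - T ^ 2) / (1 + T ^ 2)) * worst_extent T mu =
               (2 * sin alpha * sqrt (ratio_num_sq T mu) / ((1 + T ^ 2) - mu * (1 - T ^ 2))) ^ 2).
  { replace ((2 * sin alpha * sqrt (ratio_num_sq T mu) / ((1 + T ^ 2) - mu * (1 - T ^ 2))) ^ 2)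
      with (4 * sin alpha ^ 2 * sqrt (ratio_num_sq T mu) ^ 2 / ((1 + T ^ 2) - mu * (1 - T ^ 2)) ^ 2)
      by (field; lra).
    rewrite HsN2, Hs2. unfold worst_extent, ratio_num_sq. field. split; nra. }
  set (N := ratio_num_sq T mu) in *. set (D := (1 + T ^ 2) - mu * (1 - T ^ 2)) in *.
  rewrite EQ, sqrt_pow2, EY.
  - replace (N / D) with (sqrt N ^ 2 / D) by (rewrite HsN2; reflexivity). field. lra.
  - apply Rle_mult_inv_pos; nra.
Qed.

Lemma cos_antitone x y : 0 <= x -> x <= y -> y <= PI -> cos y <= cos x.
Proof.
  intros Hx Hxy Hy. destruct (Req_dec x y) as [->|Hne]; [lra|].
  apply Rlt_le, cos_decreasing_1; lra.
Qed.

Lemma cos_2alpha_regions alpha : 0 < alpha < PI / 2 ->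
  (alpha <= PI / 6 -> / 2 <= cos (2 * alpha)) /\
  (PI / 6 < alpha -> cos (2 * alpha) < / 2) /\
  (alpha < PI / 3 -> - / 2 < cos (2 * alpha)) /\
  (PI / 3 <= alpha -> cos (2 * alpha) <= - / 2).
Proof.
  intros Ha. pose proof PI_RGT_0.
  assert (C1 : cos (PI / 3) = / 2) by (rewrite cos_PI3; field).
  assert (C2 : cos (2 * (PI / 3)) = - / 2) by (rewrite cos_2PI3; field).
  repeat split; intros Hh.
  - rewrite <- C1. apply cos_antitone; lra.
  - rewrite <- C1. apply cos_decreasing_1; lra.
  - rewrite <- C2. apply cos_decreasing_1; lra.
  - rewrite <- C2. apply cos_antitone; lra.
Qed.

Lemma half_acos_facts k : -1 <= k <= 1 ->
  cos (/ 2 * acos k) ^ 2 = (1 + k) / 2 /\ sin (/ 2 * acos k) ^ 2 = (1 - k) / 2 /\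
  0 <= sin (/ 2 * acos k) /\ 0 <= cos (/ 2 * acos k).
Proof.
  intros Hk. pose proof (cos_acos k Hk) as Hc. pose proof (acos_bound k). pose proof PI_RGT_0.
  assert (E : 2 * (/ 2 * acos k) = acos k) by field.
  pose proof (cos_2a_cos (/ 2 * acos k)) as Ec. pose proof (cos_2a_sin (/ 2 * acos k)) as Es.
  rewrite E, Hc in Ec, Es.
  repeat split; [lra | lra | apply sin_ge_0 | apply cos_ge_0]; lra.
Qed.

Definition beta0_arg (alpha : R) : R :=
  (- 2 * cos (4 * alpha) + cos (6 * alpha) + 2) / (3 - 2 * cos (4 * alpha)).

Lemma beta0_arg_factor alpha : let c := cos (2 * alpha) in
  1 - beta0_arg alpha = (1 - c) * (1 + 2 * c) ^ 2 / (5 - 4 * c ^ 2) /\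
  1 + beta0_arg alpha = (1 + c) * (3 - 2 * c) ^ 2 / (5 - 4 * c ^ 2).
Proof.
  intros c.
  pose proof (COS_bound (2 * alpha)) as Hc. fold c in Hc.
  assert (C4 : cos (4 * alpha) = 2 * c ^ 2 - 1).
  { replace (4 * alpha) with (2 * (2 * alpha)) by ring. rewrite cos_2a_cos. fold c. ring. }
  assert (C6 : cos (6 * alpha) = 4 * c ^ 3 - 3 * c).
  { replace (6 * alpha) with (2 * alpha + 2 * (2 * alpha)) by ring.
    rewrite cos_plus, (cos_2a_cos (2 * alpha)), (sin_2a (2 * alpha)). fold c.
    pose proof (sin2_cos2 (2 * alpha)) as S. unfold Rsqr in S. fold c in S.
    replace (sin (2 * alpha) * (2 * sin (2 * alpha) * c))
      with (2 * c * (sin (2 * alpha) * sin (2 * alpha))) by ring.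
    replace (sin (2 * alpha) * sin (2 * alpha)) with (1 - c * c) by lra. ring. }
  assert (0 < 5 - 4 * c ^ 2) by nra.
  unfold beta0_arg. rewrite C4, C6. split; field; lra.
Qed.

(* [beta0_arg] is designed so that [tan b / tan alpha = (1 + 2 c) / (3 - 2 c)] for
   [b = acos (beta0_arg alpha) / 2], i.e. [tilt alpha b = 1/2 + c]. *)
Lemma tilt_beta0_mid alpha : 0 < alpha < PI / 2 -> - / 2 < cos (2 * alpha) < / 2 ->
  let b := / 2 * acos (beta0_arg alpha) in
  admissible alpha b /\ tilt alpha b = / 2 + cos (2 * alpha).
Proof.
  intros Ha Hc b.
  destruct (trig_tan_facts alpha Ha) as (Hca & Hsa & HT & _).
  destruct (beta0_arg_factor alpha) as [E1m E1p].
  set (c := cos (2 * alpha)) in *.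
  assert (H5 : 0 < 5 - 4 * c ^ 2) by nra.
  assert (Hk1 : 0 <= 1 - beta0_arg alpha)
    by (rewrite E1m; apply Rle_mult_inv_pos; [apply Rmult_le_pos; [lra | apply pow2_ge_0] | lra]).
  assert (Hk2 : 0 < 1 + beta0_arg alpha)
    by (rewrite E1p; apply Rdiv_lt_0_compat;
        [apply Rmult_lt_0_compat; [lra | apply pow_lt; lra] | lra]).
  destruct (half_acos_facts (beta0_arg alpha) ltac:(lra)) as (Cb2 & Sb2 & Hsb & Hcb0).
  fold b in Cb2, Sb2, Hsb, Hcb0.
  assert (Hcb : 0 < cos b) by (destruct Hcb0 as [|E]; [assumption | rewrite <- E in Cb2; nra]).
  assert (Ca2 : cos alpha ^ 2 = (1 + c) / 2) by (unfold c; rewrite cos_2a_cos; field).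
  assert (Sa2 : sin alpha ^ 2 = (1 - c) / 2) by (unfold c; rewrite cos_2a_sin; field).
  assert (HX : 0 <= sin b * cos alpha) by nra.
  assert (HY : 0 < sin alpha * cos b) by nra.
  assert (EXY : sin b * cos alpha * (3 - 2 * c) = (1 + 2 * c) * (sin alpha * cos b)).
  { apply Rsqr_inj; [nra | nra |]. unfold Rsqr.
    transitivity (sin b ^ 2 * cos alpha ^ 2 * (3 - 2 * c) ^ 2); [ring|].
    transitivity ((1 + 2 * c) ^ 2 * sin alpha ^ 2 * cos b ^ 2); [|ring].
    rewrite Sb2, Cb2, Ca2, Sa2, E1m, E1p. field. lra. }
  assert (Hadm : admissible alpha b).
  { repeat split; try assumption. unfold tan.
    apply (Rmult_le_reg_r (cos alpha)); [lra|].
    replace (sin alpha / cos alpha * cos b * cos alpha) with (sin alpha * cos b) by (field; lra).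
    nra. }
  split; [exact Hadm|].
  pose proof (edge_speed_pos _ _ Hadm) as Hk.
  unfold tilt, edge_speed in *. unfold tan in *.
  apply (Rmult_eq_reg_r (sin b * cos alpha + sin alpha * cos b)); [| lra].
  field_simplify; [lra | split; lra].
Qed.

Lemma beta0_spec alpha : 0 < alpha < PI / 2 ->
  admissible alpha (beta0 alpha) /\ tilt alpha (beta0 alpha) = best_tilt (cos (2 * alpha)).
Proof.
  intros Ha. destruct (cos_2alpha_regions alpha Ha) as (R1 & R2 & R3 & R4).
  destruct (trig_tan_facts alpha Ha) as (Hca & Hsa & _).
  unfold beta0. destruct (Rle_dec alpha (PI / 6)) as [H6 | H6].
  - split; [apply admissible_of_le; lra|]. rewrite best_tilt_hi by (apply R1, H6).
    unfold tilt, edge_speed, tan. field. lra.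
  - destruct (Rlt_dec alpha (PI / 3)) as [H3 | H3].
    + rewrite best_tilt_mid by (split; apply Rlt_le; [apply R3 | apply R2]; lra).
      apply (tilt_beta0_mid alpha Ha). split; [apply R3 | apply R2]; lra.
    + split; [apply admissible_of_le; lra|]. rewrite best_tilt_lo by (apply R4; lra).
      unfold tilt. rewrite sin_0. unfold Rdiv. ring.
Qed.

Lemma sqrt_1_plus_tan_sq alpha : 0 < alpha < PI / 2 -> sqrt (1 + tan alpha ^ 2) = / cos alpha.
Proof.
  intros Ha. destruct (trig_tan_facts alpha Ha) as (Hca & _).
  pose proof (sin2_cos2 alpha) as Hsc. unfold Rsqr in Hsc.
  rewrite <- (sqrt_pow2 (/ cos alpha)) by (left; apply Rinv_0_lt_compat, Hca).
  f_equal. unfold tan. field_simplify_eq; [lra | lra].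
Qed.

Lemma rho_hedge_eq alpha : 0 < alpha < PI / 2 -> rho_hedge alpha = hedge_rho alpha (beta0 alpha).
Proof.
  intros Ha. destruct (beta0_spec alpha Ha) as [Hadm Htilt].
  destruct (trig_tan_facts alpha Ha) as (Hca & Hsa & HT & _).
  destruct (cos_2alpha_regions alpha Ha) as (R1 & _ & _ & R4).
  unfold rho_hedge, hedge_rho. rewrite Htilt.
  destruct (Rlt_dec alpha (PI / 6)) as [H6 | H6].
  - rewrite best_tilt_hi by (apply R1; lra).
    assert (Eb : beta0 alpha = alpha) by (unfold beta0; destruct (Rle_dec alpha (PI / 6)); lra).
    unfold ratio_num_sq, edge_speed. rewrite Eb.
    replace ((1 - 1) ^ 2 + tan alpha ^ 2 * (1 + 1) ^ 2) with ((2 * tan alpha) ^ 2) by ring.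
    rewrite sqrt_pow2 by lra. unfold tan. field. lra.
  - destruct (Rle_dec alpha (PI / 3)) as [H3 | H3].
    + rewrite <- Htilt. apply f1_r0_eq_hedge_rho; assumption.
    + rewrite best_tilt_lo by (apply R4; lra).
      assert (Eb : beta0 alpha = 0)
        by (unfold beta0; destruct (Rle_dec alpha (PI / 6)); [lra|];
            destruct (Rlt_dec alpha (PI / 3)); [lra | reflexivity]).
      unfold ratio_num_sq, edge_speed. rewrite Eb, sin_0, cos_0.
      replace ((1 - 0) ^ 2 + tan alpha ^ 2 * (1 + 0) ^ 2) with (1 + tan alpha ^ 2) by ring.
      rewrite sqrt_1_plus_tan_sq by exact Ha. unfold tan. field. lra.
Qed.

Theorem theorem3 (alpha : R) (Ha : 0 < alpha < PI / 2) :
  (forall beta, 0 <= beta <= alpha ->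
     Rbar_le (comp_ratio alpha (beta0 alpha)) (comp_ratio alpha beta)) /\
  comp_ratio alpha (beta0 alpha) = Finite (rho_hedge alpha) /\
  comp_ratio_r alpha (beta0 alpha) (r0 alpha (beta0 alpha)) = Finite (rho_hedge alpha) /\
  (alpha <= PI / 6 -> r0 alpha (beta0 alpha) = 1) /\
  (PI / 3 <= alpha -> r0 alpha (beta0 alpha) = - cos (2 * alpha)).
Proof.
  destruct (beta0_spec alpha Ha) as [Hadm0 Htilt0].
  destruct (trig_tan_facts alpha Ha) as (_ & _ & HT & Hc2 & _).
  destruct (cos_2alpha_regions alpha Ha) as (R1 & _ & _ & R4).
  assert (Hgap : 1 - tan alpha ^ 2 < tilt alpha (beta0 alpha) * (1 + tan alpha ^ 2))
    by (rewrite Htilt0, Hc2; apply best_tilt_gap, HT).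
  destruct (comp_ratio_hedge alpha (beta0 alpha) Hadm0 Hgap) as [Hcr Hcr_r].
  rewrite (rho_hedge_eq alpha Ha), (r0_eq_worst_extent alpha _ Ha Hadm0).
  split; [| split; [exact Hcr | split; [exact Hcr_r | split]]].
  - intros beta Hb. rewrite Hcr.
    apply hedge_rho_best; [exact Hadm0 | apply admissible_of_le; assumption |].
    rewrite <- Hc2. exact Htilt0.
  - intros H. rewrite Htilt0, best_tilt_hi by (apply R1, H). unfold worst_extent. field. nra.
  - intros H. rewrite Htilt0, best_tilt_lo, Hc2 by (apply R4, H). unfold worst_extent. field. nra.
Qed.
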